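(* Let $f:X\to\mathcal G$ be a convex function and $x,u\in X$. Then $$\bigcap_{z^*\in C^-\setminus\{0\}}f'_{z^*}(x,u)\supseteq f'(x,u),$$ and for all $z^*\in C^-\setminus\{0\}$: $\varphi'_{f,z^*}(x,u)\le\varphi_{f'(x,\cdot),z^*}(u)=\inf\{-z^*(z): z\in f'(x,u)\}$.
   Context: $X$ real linear space, $Z$ real locally convex Hausdorff space with dual $Z^*$, $C\subseteq Z$ closed convex cone, $0\in C$, $C^-=\{z^*:z^*(c)\le 0\ \forall c\in C\}$ with $C^-\setminus\{0\}\neq\emptyset$. $\mathcal G=\{A\subseteq Z: A=\operatorname{cl}\operatorname{co}(A+C)\}$; $A\oplus B=\operatorname{cl}\{a+b\}$, $tA=\{ta\}$ ($t>0$), $A\ominus B=\{z: B+\{z\}\subseteq A\}$. $f$ convex: $f(tx_1+(1-t)x_2)\supseteq tf(x_1)\oplus(1-t)f(x_2)$. For $g:X\to\mathcal G$, $g'(x,u)=\bigcap_{t_0>0}\operatorname{cl}\operatorname{co}\bigcup_{0<t<t_0}\frac1t\big(g(x+tu)\ominus g(x)\big)$. On $\overline{\mathbb R}$ use inf-addition $\dot+$ ($(-\infty)\dot+(+\infty)=+\infty$) and $r\ominus s=\inf\{t\in\mathbb R: r\le s\dot+t\}$ ($\inf\emptyset=+\infty$). $\varphi_{f,z^*}(x)=\inf\{-z^*(z):z\in f(x)\}$ ($+\infty$ if $f(x)=\emptyset$); $\varphi'_{f,z^*}(x,u)=\inf_{t>0}\frac1t\big(\varphi_{f,z^*}(x+tu)\ominus\varphi_{f,z^*}(x)\big)$.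 $f_{z^*}(x)=\{z\in Z: \varphi_{f,z^*}(x)\le -z^*(z)\}$ and $f'_{z^*}$ is the directional derivative of $f_{z^*}$. *)

From HB Require Import structures.
From mathcomp Require Import all_boot all_order all_algebra.
From mathcomp Require Import all_classical all_reals all_analysis.
Set Implicit Arguments. Unset Strict Implicit. Unset Printing Implicit Defensive.
Import Order.TTheory GRing.Theory Num.Theory.
Import numFieldNormedType.Exports.
Local Open Scope classical_set_scope.
Local Open Scope ring_scope.

Section SetValued.
Variable R : realType.

Definition cvx_set (M : lmodType R) (A : set M) : Prop :=
  forall x y (t : R), 0 <= t -> t <= 1 -> A x -> A y -> A (t *: x + (1 - t) *: y).

Definition co (M : lmodType R) (A : set M) : set M :=
  \bigcap_(B in [set B : set M | cvx_set B /\ A `<=` B]) B.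

Definition msum (M : lmodType R) (A B : set M) : set M :=
  [set a + b | a in A & b in B].

Variable Z : tvsType R.

Definition closed_convex_cone (C : set Z) : Prop :=
  closed C /\ cvx_set C /\ C 0 /\ (forall (t : R) c, 0 <= t -> C c -> C (t *: c)).

Definition dual_elt (zs : Z -> R) : Prop :=
  (forall (a : R) (x y : Z), zs (a *: x + y) = a * zs x + zs y) /\ continuous zs.

Definition negdual (C : set Z) (zs : Z -> R) : Prop :=
  dual_elt zs /\ (forall c, C c -> zs c <= 0).

Definition negdual0 (C : set Z) (zs : Z -> R) : Prop :=
  negdual C zs /\ zs <> (fun=> 0).

Definition inG (C : set Z) (A : set Z) : Prop := A = closure (co (msum A C)).

Definition oplus (A B : set Z) : set Z := closure (msum A B).

Definition sscale (t : R) (A : set Z) : set Z := [set t *: a | a in A].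

Definition ominus (A B : set Z) : set Z := [set z | forall b, B b -> A (b + z)].

Variable X : lmodType R.

Definition sv_convex (f : X -> set Z) : Prop :=
  forall (x1 x2 : X) (t : R), 0 < t -> t < 1 ->
    oplus (sscale t (f x1)) (sscale (1 - t) (f x2)) `<=` f (t *: x1 + (1 - t) *: x2).

Definition sv_dirder (g : X -> set Z) (x u : X) : set Z :=
  \bigcap_(t0 in [set t0 : R | 0 < t0])
    closure (co (\bigcup_(t in [set t : R | 0 < t < t0])
                   sscale t^-1 (ominus (g (x + t *: u)) (g x)))).

Definition eminus (r s : \bar R) : \bar R :=
  ereal_inf [set t%:E | t in [set t : R | (r <= dual_adde s t%:E)%E]].

(* phi_{f,z^*}(x) = inf { -z^*(z) : z in f(x) }  (+oo if f(x) empty) *)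
Definition phi (f : X -> set Z) (zs : Z -> R) (x : X) : \bar R :=
  ereal_inf [set (- zs z)%:E | z in f x].

Definition phi_dirder (f : X -> set Z) (zs : Z -> R) (x u : X) : \bar R :=
  ereal_inf [set ((t^-1)%:E * eminus (phi f zs (x + t *: u)) (phi f zs x))%E
            | t in [set t : R | 0 < t]].

Definition f_scal (f : X -> set Z) (zs : Z -> R) (x : X) : set Z :=
  [set z | (phi f zs x <= (- zs z)%:E)%E].

End SetValued.

From HB Require Import structures.
From mathcomp Require Import all_boot all_order all_algebra.
From mathcomp Require Import all_classical all_reals all_analysis.
From mathcomp Require Import lra.
Import Order.TTheory GRing.Theory Num.Theory.
Import numFieldNormedType.Exports.
Set Implicit Arguments.
Local Open Scope classical_set_scope.
Local Open Scope ring_scope.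

(* Neither part needs convexity of f nor any property of C.  If f(x) + v lies in
   f(x + tu), then the scalarization f_{z^*}(x) + v lies in f_{z^*}(x + tu) and
   phi(x + tu) (-) phi(x) <= -z^*(v); so each difference quotient of f is one of
   f_{z^*}, and each has -z^* value at least phi'(x,u).  The latter bound passes
   to closed convex hulls because half-spaces {w | d <= -z^*(w)} are closed and
   convex. *)

Section DualElement.
Variables (R : realType) (Z : tvsType R) (zs : Z -> R).
Hypothesis zs_dual : dual_elt zs.

Lemma dual_elt0 : zs 0 = 0.
Proof.
have := zs_dual.1 1 0 0; rewrite scale1r addr0 mul1r => zs00.
by apply: (addrI (zs 0)); rewrite addr0 -zs00.
Qed.

Lemma dual_eltD a b : zs (a + b) = zs a + zs b.
Proof. by have := zs_dual.1 1 a b; rewrite scale1r mul1r. Qed.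

Lemma dual_eltZ (k : R) a : zs (k *: a) = k * zs a.
Proof. by have := zs_dual.1 k a 0; rewrite !addr0 dual_elt0 addr0. Qed.

Lemma closed_dual_ge (d : \bar R) : closed [set w | (d <= (- zs w)%:E)%E].
Proof.
case: d => [r||].
- rewrite (_ : [set w | _] = zs @^-1` [set y | y <= - r]); last first.
    by apply: funext => w /=; rewrite lee_fin lerNr.
  by apply: preimage_closed; [move=> w _; exact: zs_dual.2 | exact: closed_le].
- by rewrite (_ : [set w | _] = set0); [exact: closed0 | apply/seteqP; split].
- rewrite (_ : [set w | _] = setT); first exact: closedT.
  by apply/seteqP; split=> w // _; rewrite /= leNye.
Qed.

Lemma cvx_dual_ge (d : \bar R) : cvx_set [set w | (d <= (- zs w)%:E)%E].
Proof.
move=> w1 w2 t t0 t1; case: d => [r||] /= le1 le2; last by rewrite leNye.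
  by move: le1 le2; rewrite !lee_fin dual_eltD !dual_eltZ; nra.
by move: le1; rewrite leye_eq.
Qed.

End DualElement.

Section ConvexHull.
Variables (R : realType) (M : lmodType R).

Lemma co_subset (A B : set M) : A `<=` B -> co A `<=` co B.
Proof.
by move=> AB w coAw S [cvxS BS]; apply: coAw; split=> //; exact: subset_trans BS.
Qed.

Lemma co_sub_cvx (A S : set M) : cvx_set S -> A `<=` S -> co A `<=` S.
Proof. by move=> cvxS AS w; apply. Qed.

End ConvexHull.

Section Scalarization.
Variables (R : realType) (X : lmodType R) (Z : tvsType R).
Implicit Types (f g h : X -> set Z) (zs : Z -> R).

Lemma sv_dirder_subset g h x u :
  (forall t : R, 0 < t -> ominus (g (x + t *: u)) (g x) `<=` ominus (h (x + t *: u)) (h x)) ->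
  sv_dirder g x u `<=` sv_dirder h x u.
Proof.
move=> gh z gz t0 t0_gt0; apply: closureS (gz t0 t0_gt0); apply: co_subset.
move=> _ [t /[dup] t_in /andP[t_gt0 _] [v gv <-]].
by exists t => //; exists v => //; exact: gh.
Qed.

Lemma sv_dirder_sub_closed_cvx g x u (S : set Z) : closed S -> cvx_set S ->
  \bigcup_(t in [set t : R | 0 < t < 1]) sscale t^-1 (ominus (g (x + t *: u)) (g x)) `<=` S ->
  sv_dirder g x u `<=` S.
Proof.
move=> clS cvxS quotS z gz; move/closure_id: clS => ->.
by apply: closureS (gz 1 ltr01); exact: co_sub_cvx.
Qed.

Lemma phi_ominus_le f zs x y v : dual_elt zs -> ominus (f y) (f x) v ->
  (phi f zs y <= phi f zs x + (- zs v)%:E)%E.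
Proof.
move=> zs_dual fxy; rewrite -leeBlDr //; apply/ereal_infP => _ [b fb <-].
rewrite leeBlDr // -EFinD -opprD -dual_eltD //.
by apply: ereal_inf_lbound; exists (b + v) => //; exact: fxy.
Qed.

Lemma ominus_f_scal f zs x y : dual_elt zs ->
  ominus (f y) (f x) `<=` ominus (f_scal f zs y) (f_scal f zs x).
Proof.
move=> zs_dual v fxy b; rewrite /f_scal /= => phi_b.
apply: le_trans (phi_ominus_le f x y zs_dual fxy) _.
by rewrite dual_eltD // opprD EFinD leeD2r.
Qed.

Lemma eminus_phi_le f zs x y v : dual_elt zs -> ominus (f y) (f x) v ->
  (eminus (phi f zs y) (phi f zs x) <= (- zs v)%:E)%E.
Proof.
move=> zs_dual fxy; apply: ereal_inf_lbound; exists (- zs v) => //=.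
have -> : dual_adde (phi f zs x) (- zs v)%:E = (phi f zs x + (- zs v)%:E)%E.
  by case: (phi f zs x).
exact: (phi_ominus_le f x y zs_dual fxy).
Qed.

Lemma phi_dirder_le_quotient f zs x u (t : R) v : dual_elt zs -> 0 < t ->
  ominus (f (x + t *: u)) (f x) v -> (phi_dirder f zs x u <= (- zs (t^-1 *: v))%:E)%E.
Proof.
move=> zs_dual t_gt0 fxv.
have phi_le : (phi_dirder f zs x u <=
               t^-1%:E * eminus (phi f zs (x + t *: u)) (phi f zs x))%E.
  by apply: ereal_inf_lbound; exists t.
apply: le_trans phi_le _; rewrite dual_eltZ // -mulrN EFinM.
by apply: lee_wpmul2l; [rewrite lee_fin invr_ge0 ltW | exact: eminus_phi_le].
Qed.

End Scalarization.

Theorem mainTheorem9 (R : realType) (X : lmodType R) (Z : tvsType R)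
  (C : set Z) (f : X -> set Z) (x u : X) :
  hausdorff_space Z ->
  closed_convex_cone C ->
  (exists zs : Z -> R, negdual0 C zs) ->
  (forall y, inG C (f y)) ->
  sv_convex f ->
  sv_dirder f x u `<=`
    [set z | forall zs : Z -> R, negdual0 C zs -> sv_dirder (f_scal f zs) x u z]
  /\ (forall zs : Z -> R, negdual0 C zs ->
        (phi_dirder f zs x u <= phi (fun v => sv_dirder f x v) zs u)%E).
Proof.
move=> _ _ _ _ _; split.
  move=> z fz zs [[zs_dual _] _]; move: z fz; apply: sv_dirder_subset => t _.
  exact: ominus_f_scal.
move=> zs [[zs_dual _] _]; apply/ereal_infP => _ [z fz <-].
set d := phi_dirder f zs x u.
apply: (sv_dirder_sub_closed_cvx (closed_dual_ge zs_dual d) (cvx_dual_ge zs_dual d) _ fz).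
move=> _ [t /andP[t_gt0 _] [v fv <-]].
exact: phi_dirder_le_quotient fv.
Qed.
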